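(* Every rectangle whose side lengths are positive integers can be domed.
   Context: All equilateral triangles have unit edge length. A polyiamond is a polygon that is a union of unit equilateral triangles (glued edge to edge). For a convex polygon $P$, $P$ can be (deltahedrally) domed if there is a convex polyhedron that has $P$ as one face and all of whose other faces are convex polyiamonds; the union of these other faces is the dome, and $P$ is its base. *)

From Stdlib Require Import Reals List.
Import ListNotations.
Open Scope R_scope.

Record pt := Pt { px : R; py : R; pz : R }.

Definition vadd (p q : pt) : pt := Pt (px p + px q) (py p + py q) (pz p + pz q).
Definition vsub (p q : pt) : pt := Pt (px p - px q) (py p - py q) (pz p - pz q).
Definition vscale (k : R) (p : pt) : pt := Pt (k * px p) (k * py p) (k * pz p).
Definition vzero : pt := Pt 0 0 0.
Definition dot (p q : pt) : R := px p * px q + py p * py q + pz p * pz q.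
Definition cross (p q : pt) : pt :=
  Pt (py p * pz q - pz p * py q) (pz p * px q - px p * pz q) (px p * py q - py p * px q).
Definition dist (p q : pt) : R := sqrt (dot (vsub p q) (vsub p q)).

Definition pset := pt -> Prop.

Definition conv (l : list pt) : pset := fun x =>
  exists wl : list (R * pt),
    (forall wp, In wp wl -> 0 <= fst wp /\ In (snd wp) l) /\
    fold_right (fun wp s => fst wp + s) 0 wl = 1 /\
    x = fold_right (fun wp s => vadd (vscale (fst wp) (snd wp)) s) vzero wl.

(* A convex polyhedron: convex hull of finitely many points, not all coplanar
   (i.e. a full-dimensional convex polytope in R^3). *)
Definition convex_polyhedron (V : list pt) : Prop :=
  exists p0 p1 p2 p3, In p0 V /\ In p1 V /\ In p2 V /\ In p3 V /\
    dot (vsub p1 p0) (cross (vsub p2 p0) (vsub p3 p0)) <> 0.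

(* F is a face (facet) of the convex body K: the intersection of K with a
   supporting plane, which is two-dimensional (contains three non-collinear
   points). *)
Definition is_face (K F : pset) : Prop :=
  exists (n : pt) (c : R), n <> vzero /\
    (forall x, K x -> dot n x <= c) /\
    (forall x, F x <-> (K x /\ dot n x = c)) /\
    exists p q r, F p /\ F q /\ F r /\ cross (vsub q p) (vsub r p) <> vzero.

Definition rectangle (o u v : pt) (a b : R) : pset := fun x =>
  exists s t, 0 <= s <= a /\ 0 <= t <= b /\
    x = vadd o (vadd (vscale s u) (vscale t v)).

Definition orthonormal (u v : pt) : Prop :=
  dot u u = 1 /\ dot v v = 1 /\ dot u v = 0.

Definition unit_triangle (T : pt * pt * pt) : Prop :=
  let '(p, q, r) := T in dist p q = 1 /\ dist q r = 1 /\ dist r p = 1.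

Definition tri_region (T : pt * pt * pt) : pset :=
  let '(p, q, r) := T in conv [p; q; r].

Definition tri_vertices (T : pt * pt * pt) : list pt :=
  let '(p, q, r) := T in [p; q; r].

Definition edge_to_edge (T1 T2 : pt * pt * pt) : Prop :=
  (forall x, ~ (tri_region T1 x /\ tri_region T2 x)) \/
  (exists v, In v (tri_vertices T1) /\ In v (tri_vertices T2) /\
     forall x, (tri_region T1 x /\ tri_region T2 x) <-> x = v) \/
  (exists v w, v <> w /\ In v (tri_vertices T1) /\ In v (tri_vertices T2) /\
     In w (tri_vertices T1) /\ In w (tri_vertices T2) /\
     forall x, (tri_region T1 x /\ tri_region T2 x) <-> conv [v; w] x).

Definition polyiamond (F : pset) : Prop :=
  exists Ts : list (pt * pt * pt),
    (forall T, In T Ts -> unit_triangle T) /\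
    (forall i j d, i <> j -> (i < length Ts)%nat -> (j < length Ts)%nat ->
        edge_to_edge (nth i Ts d) (nth j Ts d)) /\
    (forall x, F x <-> exists T, In T Ts /\ tri_region T x).

Definition convex_set (F : pset) : Prop :=
  forall x y t, F x -> F y -> 0 <= t <= 1 ->
    F (vadd (vscale (1 - t) x) (vscale t y)).

Definition convex_polyiamond (F : pset) : Prop := convex_set F /\ polyiamond F.

Definition domed_by (V : list pt) (P : pset) : Prop :=
  convex_polyhedron V /\ is_face (conv V) P /\
  forall F, is_face (conv V) F -> (forall x, F x <-> P x) \/ convex_polyiamond F.

(* For b <= a, the hip roof over the a x b rectangle with ridge from
   (b/2, b/2, b/sqrt 2) to (a - b/2, b/2, b/sqrt 2) is such a dome.  Each
   sloped face is spanned from a base corner by a unit base direction and a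
   unit vector at 60 degrees to it, so it is a trapezoid (a triangle on the
   short sides) of a unit triangular lattice, tiled edge to edge by lattice
   triangles.  A plane supporting the roof through three non-collinear
   vertices is that of the base or of one of the four sloped faces, so these
   are all the faces.  For b > a, exchange the axes. *)

From Pilot Require Import Defs.
From Stdlib Require Import Reals List Lra Lia Classical FinFun.
Import ListNotations.
Open Scope R_scope.

(** * Convex hulls *)

Lemma pt_ext p q : px p = px q -> py p = py q -> pz p = pz q -> p = q.
Proof. destruct p, q; simpl; intros; subst; reflexivity. Qed.

Definition wsum (wl : list (R * pt)) : R := fold_right (fun wp s => fst wp + s) 0 wl.

Definition wcomb (wl : list (R * pt)) : pt :=
  fold_right (fun wp s => vadd (vscale (fst wp) (snd wp)) s) vzero wl.

Definition weights_on (l : list pt) (wl : list (R * pt)) : Prop :=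
  forall wp, In wp wl -> 0 <= fst wp /\ In (snd wp) l.

Lemma weights_on_cons l w p wl :
  weights_on l ((w, p) :: wl) <-> (0 <= w /\ In p l) /\ weights_on l wl.
Proof.
  split.
  - intros H; split; [apply (H (w, p)); left; reflexivity|].
    intros wp Hwp; apply H; right; exact Hwp.
  - intros [Hp Hl] wp [<-|Hwp]; auto.
Qed.

Lemma dot_wcomb_cons n w p wl :
  dot n (wcomb ((w, p) :: wl)) = w * dot n p + dot n (wcomb wl).
Proof. unfold dot; simpl; ring. Qed.

Lemma dot_wcomb_le l n c wl :
  (forall v, In v l -> dot n v <= c) -> weights_on l wl ->
  dot n (wcomb wl) <= c * wsum wl.
Proof.
  intros Hl; induction wl as [|[w p] wl IH]; intros Hw.
  - unfold dot, wcomb, wsum; simpl; lra.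
  - apply weights_on_cons in Hw as [[Hw0 Hp] Hw].
    rewrite dot_wcomb_cons; simpl.
    pose proof (Rmult_le_compat_l w _ _ Hw0 (Hl p Hp)).
    specialize (IH Hw); lra.
Qed.

Lemma conv_le l n c x :
  (forall v, In v l -> dot n v <= c) -> conv l x -> dot n x <= c.
Proof.
  intros Hl (wl & Hw & Hs & ->).
  pose proof (dot_wcomb_le l n c wl Hl Hw) as H.
  change (wsum wl = 1) in Hs; rewrite Hs in H; change (dot n (wcomb wl) <= c); lra.
Qed.

Lemma conv_eq l n c x :
  (forall v, In v l -> dot n v = c) -> conv l x -> dot n x = c.
Proof.
  intros Hl Hx.
  assert (Hn : forall y, dot (vscale (-1) n) y = - dot n y) by (intros; unfold dot; simpl; ring).
  pose proof (conv_le l n c x (fun v Hv => Req_le _ _ (Hl v Hv)) Hx).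
  assert (dot (vscale (-1) n) x <= - c); [|rewrite Hn in *; lra].
  apply (conv_le l); auto; intros v Hv; rewrite Hn, Hl; auto; lra.
Qed.

Lemma conv_in l v : In v l -> conv l v.
Proof.
  intros Hv; exists [(1, v)]; split; [|split].
  - intros wp [<-|[]]; simpl; split; auto; lra.
  - simpl; ring.
  - apply pt_ext; simpl; ring.
Qed.

Lemma conv_incl l l' x : incl l l' -> conv l x -> conv l' x.
Proof.
  intros Hll' (wl & Hw & Hs & Hx); exists wl; split; auto.
  intros wp Hwp; destruct (Hw wp Hwp); auto.
Qed.

Lemma conv_ext l l' : incl l l' -> incl l' l -> forall x, conv l x <-> conv l' x.
Proof. split; apply conv_incl; auto. Qed.

(* A convex combination lying on a supporting plane puts zero weight on the
   vertices strictly below the plane. *)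
Lemma wcomb_supported l l' n c wl :
  (forall v, In v l -> dot n v <= c) ->
  (forall v, In v l -> dot n v < c \/ In v l') ->
  weights_on l wl -> dot n (wcomb wl) = c * wsum wl ->
  exists wl', weights_on l' wl' /\ wsum wl' = wsum wl /\ wcomb wl' = wcomb wl.
Proof.
  intros Hle Hl'; induction wl as [|[w p] wl IH]; intros Hw Heq.
  - exists []; split; [intros ? []|split; reflexivity].
  - apply weights_on_cons in Hw as [[Hw0 Hp] Hw].
    rewrite dot_wcomb_cons in Heq; simpl in Heq.
    pose proof (dot_wcomb_le l n c wl Hle Hw).
    pose proof (Rmult_le_compat_l w _ _ Hw0 (Hle p Hp)).
    destruct (IH Hw) as (wl' & Hw' & Hs & Hc); [lra|].
    destruct (Hl' p Hp) as [Hlt|Hin].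
    + assert (w = 0) as ->.
      { destruct (Rle_lt_or_eq _ _ Hw0) as [Hpos|]; auto.
        pose proof (Rmult_lt_compat_l w _ _ Hpos Hlt); lra. }
      exists wl'; split; auto; simpl; rewrite Hs, Hc; split; [ring|].
      apply pt_ext; simpl; ring.
    + exists ((w, p) :: wl'); split; [apply weights_on_cons; auto|].
      simpl; rewrite Hs, Hc; auto.
Qed.

Lemma conv_supported l l' n c x :
  (forall v, In v l -> dot n v <= c) ->
  (forall v, In v l -> dot n v < c \/ In v l') ->
  conv l x -> dot n x = c -> conv l' x.
Proof.
  intros Hle Hl' (wl & Hw & Hs & ->) Hx.
  change (wsum wl = 1) in Hs; change (dot n (wcomb wl) = c) in Hx.
  destruct (wcomb_supported l l' n c wl Hle Hl' Hw) as (wl' & Hw' & Hs' & Hc);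
    [rewrite Hs; lra|].
  exists wl'; split; auto; split; [change (wsum wl' = 1); congruence | symmetry; exact Hc].
Qed.

Lemma wsum_app wl1 wl2 : wsum (wl1 ++ wl2) = wsum wl1 + wsum wl2.
Proof. induction wl1 as [|wp wl1 IH]; simpl; [ring|]; unfold wsum in *; rewrite IH; ring. Qed.

Lemma wcomb_app wl1 wl2 : wcomb (wl1 ++ wl2) = vadd (wcomb wl1) (wcomb wl2).
Proof.
  induction wl1 as [|wp wl1 IH]; simpl; [apply pt_ext; simpl; ring|].
  unfold wcomb in *; rewrite IH; apply pt_ext; simpl; ring.
Qed.

Definition wscale (t : R) (wl : list (R * pt)) : list (R * pt) :=
  map (fun wp => (t * fst wp, snd wp)) wl.

Lemma wsum_scale t wl : wsum (wscale t wl) = t * wsum wl.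
Proof. induction wl as [|wp wl IH]; simpl; [ring|]; unfold wsum in *; rewrite IH; ring. Qed.

Lemma wcomb_scale t wl : wcomb (wscale t wl) = vscale t (wcomb wl).
Proof.
  induction wl as [|wp wl IH]; simpl; [apply pt_ext; simpl; ring|].
  unfold wcomb in *; rewrite IH; apply pt_ext; simpl; ring.
Qed.

Lemma weights_on_scale l t wl : 0 <= t -> weights_on l wl -> weights_on l (wscale t wl).
Proof.
  intros Ht Hw wp Hwp; apply in_map_iff in Hwp as ([w p] & <- & Hwp).
  destruct (Hw _ Hwp); simpl in *; split; auto; apply Rmult_le_pos; auto.
Qed.

Lemma conv_convex l : convex_set (conv l).
Proof.
  intros x y t (wx & Hx & Sx & ->) (wy & Hy & Sy & ->) Ht.
  change (wsum wx = 1) in Sx; change (wsum wy = 1) in Sy.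
  exists (wscale (1 - t) wx ++ wscale t wy); split; [|split].
  - intros wp Hwp; apply in_app_or in Hwp as [Hwp|Hwp];
      [apply (weights_on_scale l (1 - t) wx)|apply (weights_on_scale l t wy)]; auto; lra.
  - change (wsum (wscale (1 - t) wx ++ wscale t wy) = 1).
    rewrite wsum_app, !wsum_scale, Sx, Sy; ring.
  - change (vadd (vscale (1 - t) (wcomb wx)) (vscale t (wcomb wy))
            = wcomb (wscale (1 - t) wx ++ wscale t wy)).
    rewrite wcomb_app, !wcomb_scale; reflexivity.
Qed.

Definition comb4 (w1 w2 w3 w4 : R) (p1 p2 p3 p4 : pt) : pt :=
  vadd (vscale w1 p1) (vadd (vscale w2 p2) (vadd (vscale w3 p3) (vscale w4 p4))).

Lemma conv4E p1 p2 p3 p4 x :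
  conv [p1; p2; p3; p4] x <-> exists w1 w2 w3 w4,
    0 <= w1 /\ 0 <= w2 /\ 0 <= w3 /\ 0 <= w4 /\ w1 + w2 + w3 + w4 = 1 /\
    x = comb4 w1 w2 w3 w4 p1 p2 p3 p4.
Proof.
  split.
  - intros (wl & Hw & Hs & ->); change (wsum wl = 1) in Hs.
    enough (exists w1 w2 w3 w4, 0 <= w1 /\ 0 <= w2 /\ 0 <= w3 /\ 0 <= w4 /\
              w1 + w2 + w3 + w4 = wsum wl /\ wcomb wl = comb4 w1 w2 w3 w4 p1 p2 p3 p4)
      as (w1 & w2 & w3 & w4 & ? & ? & ? & ? & ? & ?)
      by (exists w1, w2, w3, w4; repeat split; auto; lra).
    clear Hs; induction wl as [|[w p] wl IH].
    + exists 0, 0, 0, 0; repeat split; try (simpl; lra); apply pt_ext; unfold comb4; simpl; ring.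
    + apply weights_on_cons in Hw as [[Hw0 Hp] Hw].
      destruct (IH Hw) as (w1 & w2 & w3 & w4 & ? & ? & ? & ? & Hs & Hc).
      change (wcomb ((w, p) :: wl)) with (vadd (vscale w p) (wcomb wl)).
      simpl wsum; rewrite Hc, <- Hs.
      destruct Hp as [<-|[<-|[<-|[<-|[]]]]];
        [exists (w1 + w), w2, w3, w4|exists w1, (w2 + w), w3, w4
        |exists w1, w2, (w3 + w), w4|exists w1, w2, w3, (w4 + w)];
        repeat split; try lra; apply pt_ext; unfold comb4; simpl; ring.
  - intros (w1 & w2 & w3 & w4 & ? & ? & ? & ? & Hs & ->).
    exists [(w1, p1); (w2, p2); (w3, p3); (w4, p4)]; split; [|split].
    + intros wp Hwp; simpl in Hwp.
      destruct Hwp as [<-|[<-|[<-|[<-|[]]]]]; simpl; auto 6.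
    + simpl; lra.
    + apply pt_ext; unfold comb4; simpl; ring.
Qed.

Lemma conv3E p q r x :
  conv [p; q; r] x <-> exists u v w,
    0 <= u /\ 0 <= v /\ 0 <= w /\ u + v + w = 1 /\
    x = vadd (vscale u p) (vadd (vscale v q) (vscale w r)).
Proof.
  rewrite (conv_ext [p; q; r] [p; q; r; r]) by (intros y; simpl; tauto).
  rewrite conv4E; split.
  - intros (w1 & w2 & w3 & w4 & ? & ? & ? & ? & ? & ->).
    exists w1, w2, (w3 + w4); repeat split; try lra; apply pt_ext; unfold comb4; simpl; ring.
  - intros (u & v & w & ? & ? & ? & ? & ->); exists u, v, w, 0; repeat split; try lra.
    apply pt_ext; unfold comb4; simpl; ring.
Qed.

Lemma conv2E p q x :
  conv [p; q] x <-> exists s, 0 <= s <= 1 /\ x = vadd (vscale (1 - s) p) (vscale s q).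
Proof.
  rewrite (conv_ext [p; q] [p; q; q]) by (intros y; simpl; tauto).
  rewrite conv3E; split.
  - intros (u & v & w & ? & ? & ? & ? & ->).
    exists (v + w); split; [lra|]; apply pt_ext; simpl.
    all: replace u with (1 - (v + w)) by lra; ring.
  - intros (s & ? & ->); exists (1 - s), s, 0; repeat split; try lra.
    apply pt_ext; simpl; ring.
Qed.

Lemma conv2_collinear p q x y z :
  conv [p; q] x -> conv [p; q] y -> conv [p; q] z ->
  cross (vsub y x) (vsub z x) = vzero.
Proof.
  intros Hx Hy Hz; apply conv2E in Hx as (s1 & _ & ->), Hy as (s2 & _ & ->), Hz as (s3 & _ & ->).
  apply pt_ext; unfold cross; simpl; ring.
Qed.

(** * The triangular lattice in a plane *)

Definition frame_pt (O e1 e2 : pt) (X Y : R) : pt :=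
  vadd O (vadd (vscale X e1) (vscale Y e2)).

(* The side from (m,0) to (m',k) lies on the line k X + (m - m') Y = k m. *)
Lemma conv_frame_quad O e1 e2 m m' k x :
  0 < k -> 0 <= m' <= m ->
  conv [frame_pt O e1 e2 0 0; frame_pt O e1 e2 m 0; frame_pt O e1 e2 m' k;
        frame_pt O e1 e2 0 k] x <->
  exists X Y, x = frame_pt O e1 e2 X Y /\
    0 <= X /\ 0 <= Y <= k /\ k * X + (m - m') * Y <= k * m.
Proof.
  intros Hk Hm; rewrite conv4E; split.
  - intros (w1 & w2 & w3 & w4 & ? & ? & ? & ? & Hs & ->).
    exists (w2 * m + w3 * m'), ((w3 + w4) * k); split.
    { replace w1 with (1 - w2 - w3 - w4) by lra.
      apply pt_ext; unfold comb4, frame_pt; simpl; ring. }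
    assert (0 <= w4 * m') by nra.
    assert ((w2 + w3 + w4) * m <= m) by nra.
    repeat split; nra.
  - intros (X & Y & -> & HX & HY & HXY).
    assert (Ht : exists t, 0 <= t <= 1 /\ Y = t * k).
    { exists (Y / k); repeat split.
      - apply Rmult_le_pos; [lra|apply Rlt_le, Rinv_0_lt_compat; lra].
      - apply Rmult_le_reg_r with k; [lra|]; unfold Rdiv; rewrite Rmult_assoc, Rinv_l; lra.
      - field; lra. }
    destruct Ht as (t & Ht & ->).
    set (L := m - (m - m') * t).
    assert (HXL : X <= L) by (unfold L; apply Rmult_le_reg_l with k; nra).
    assert (HL : 0 <= L) by (unfold L; nra).
    assert (Hs : exists s, 0 <= s <= 1 /\ X = s * L).
    { destruct (Rle_lt_or_eq _ _ HL) as [HL'|HL'].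
      - exists (X / L); repeat split.
        + apply Rmult_le_pos; [lra|apply Rlt_le, Rinv_0_lt_compat; lra].
        + apply Rmult_le_reg_r with L; [lra|]; unfold Rdiv; rewrite Rmult_assoc, Rinv_l; lra.
        + field; lra.
      - exists 0; split; lra. }
    destruct Hs as (s & Hs & ->).
    exists ((1 - t) * (1 - s)), ((1 - t) * s), (t * s), (t * (1 - s)).
    repeat split; try nra.
    apply pt_ext; unfold comb4, frame_pt, L; simpl; ring.
Qed.

Definition equilateral_frame (e1 e2 : pt) : Prop :=
  dot e1 e1 = 1 /\ dot e2 e2 = 1 /\ dot e1 e2 = 1 / 2.

Lemma frame_pt_inj O e1 e2 X Y X' Y' :
  equilateral_frame e1 e2 ->
  frame_pt O e1 e2 X Y = frame_pt O e1 e2 X' Y' -> X = X' /\ Y = Y'.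
Proof.
  intros (H11 & H22 & H12) E.
  assert (Hd : forall e Z W, dot e (frame_pt O e1 e2 Z W)
                             = dot e O + Z * dot e e1 + W * dot e e2)
    by (intros; unfold dot; simpl; ring).
  assert (H21 : dot e2 e1 = 1 / 2) by (rewrite <- H12; unfold dot; ring).
  pose proof (f_equal (dot e1) E) as E1; pose proof (f_equal (dot e2) E) as E2.
  rewrite !Hd, H11, H12 in E1; rewrite !Hd, H22, H21 in E2.
  split; lra.
Qed.

Lemma frame_pt_dist O e1 e2 X Y X' Y' :
  equilateral_frame e1 e2 ->
  Defs.dist (frame_pt O e1 e2 X Y) (frame_pt O e1 e2 X' Y')
  = sqrt ((X - X') * (X - X') + (X - X') * (Y - Y') + (Y - Y') * (Y - Y')).
Proof.
  intros (H11 & H22 & H12); unfold Defs.dist; f_equal.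
  transitivity ((X - X') * (X - X') * dot e1 e1 + 2 * (X - X') * (Y - Y') * dot e1 e2
                + (Y - Y') * (Y - Y') * dot e2 e2).
  - unfold dot; simpl; ring.
  - rewrite H11, H22, H12; field.
Qed.

(* Cells of the lattice, in frame coordinates: [true] for upward triangles,
   [false] for downward ones. *)
Definition cell := (bool * nat * nat)%type.

Definition cell_corners (c : cell) : (R * R) * (R * R) * (R * R) :=
  match c with
  | (true, i, j) => ((INR i, INR j), (INR i + 1, INR j), (INR i, INR j + 1))
  | (false, i, j) => ((INR i + 1, INR j), (INR i, INR j + 1), (INR i + 1, INR j + 1))
  end.

Definition corner_list (c : cell) : list (R * R) :=
  let '(P, Q, T) := cell_corners c in [P; Q; T].

Definition in_cell (c : cell) (X Y : R) : Prop :=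
  match c with
  | (true, i, j) => INR i <= X /\ INR j <= Y /\ X + Y <= INR i + INR j + 1
  | (false, i, j) => X <= INR i + 1 /\ Y <= INR j + 1 /\ INR i + INR j + 1 <= X + Y
  end.

Definition cells_edge_to_edge (c1 c2 : cell) : Prop :=
  (forall X Y, ~ (in_cell c1 X Y /\ in_cell c2 X Y)) \/
  (exists P, In P (corner_list c1) /\ In P (corner_list c2) /\
     forall X Y, (in_cell c1 X Y /\ in_cell c2 X Y) <-> (X = fst P /\ Y = snd P)) \/
  (exists P Q, P <> Q /\ In P (corner_list c1) /\ In P (corner_list c2) /\
     In Q (corner_list c1) /\ In Q (corner_list c2) /\
     forall X Y, (in_cell c1 X Y /\ in_cell c2 X Y) <->
       exists s, 0 <= s <= 1 /\ X = (1 - s) * fst P + s * fst Q /\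
                 Y = (1 - s) * snd P + s * snd Q).

Lemma cells_edge_to_edge_sym c1 c2 :
  cells_edge_to_edge c2 c1 -> cells_edge_to_edge c1 c2.
Proof.
  intros [H|[(P & ? & ? & H)|(P & Q & ? & ? & ? & ? & ? & H)]].
  - left; intros X Y [? ?]; apply (H X Y); split; auto.
  - right; left; exists P; do 2 (split; auto); intros X Y; rewrite <- H; tauto.
  - right; right; exists P, Q; do 5 (split; auto); intros X Y; rewrite <- H; tauto.
Qed.

Ltac INR_simpl := rewrite ?plus_INR, ?INR_1 in *.

Ltac nat_ineq := apply INR_le; INR_simpl; lra.

Ltac corner_in := simpl; INR_simpl;
  solve [repeat (first [left; f_equal; lra | right])].

Ltac common_corner P :=
  right; left; exists P; split; [corner_in|]; split; [corner_in|];
  intros X Y; simpl; INR_simpl; split;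
  [intros [[? [? ?]] [? [? ?]]]; split; lra | intros [-> ->]; repeat split; lra].

Ltac common_edge P Q s :=
  right; right; exists P, Q; split; [intros E; injection E; lra|];
  do 4 (split; [corner_in|]);
  intros X Y; simpl; INR_simpl; split;
  [intros [[? [? ?]] [? [? ?]]]; exists (s X Y); cbv beta; repeat split; lra
  |intros (t & ? & -> & ->); repeat split; lra].

Ltac disjoint_or_meet c1 c2 :=
  destruct (classic (exists X Y, in_cell c1 X Y /\ in_cell c2 X Y))
    as [(X0 & Y0 & H1 & H2)|Hdisj];
  [simpl in H1, H2; INR_simpl|left; intros X Y H; apply Hdisj; eauto].

(* A common point bounds the indices of two cells against each other, which
   leaves only the six neighbouring cells. *)
Lemma up_cells_edge_to_edge i j i' j' :
  (i, j) <> (i', j') -> cells_edge_to_edge (true, i, j) (true, i', j').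
Proof.
  intros Hne; disjoint_or_meet (true, i, j) (true, i', j').
  assert (i' + j <= i + j + 1)%nat by nat_ineq. assert (i + j' <= i + j + 1)%nat by nat_ineq.
  assert (i + j <= i' + j + 1)%nat by nat_ineq. assert (i' + j <= i' + j' + 1)%nat by nat_ineq.
  assert (i' + j' <= i + j + 1)%nat by nat_ineq. assert (i + j <= i' + j' + 1)%nat by nat_ineq.
  assert (~ (i = i' /\ j = j')) by (intros [-> ->]; auto).
  assert (((i' = i + 1 /\ j' = j) \/ (i = i' + 1 /\ j' = j) \/ (i' = i /\ j' = j + 1) \/
           (i' = i /\ j = j' + 1) \/ (i' = i + 1 /\ j = j' + 1) \/ (i = i' + 1 /\ j' = j + 1))%nat)
    as [[-> ->]|[[-> ->]|[[-> ->]|[[-> ->]|[[-> ->]|[-> ->]]]]]] by lia.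
  - common_corner (INR i + 1, INR j).
  - common_corner (INR i' + 1, INR j).
  - common_corner (INR i, INR j + 1).
  - common_corner (INR i, INR j' + 1).
  - common_corner (INR i + 1, INR j' + 1).
  - common_corner (INR i' + 1, INR j + 1).
Qed.

Lemma down_cells_edge_to_edge i j i' j' :
  (i, j) <> (i', j') -> cells_edge_to_edge (false, i, j) (false, i', j').
Proof.
  intros Hne; disjoint_or_meet (false, i, j) (false, i', j').
  assert (i + j <= i' + j + 1)%nat by nat_ineq. assert (i + j <= i + j' + 1)%nat by nat_ineq.
  assert (i' + j' <= i + j' + 1)%nat by nat_ineq. assert (i' + j' <= i' + j + 1)%nat by nat_ineq.
  assert (i' + j' <= i + j + 1)%nat by nat_ineq. assert (i + j <= i' + j' + 1)%nat by nat_ineq.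
  assert (~ (i = i' /\ j = j')) by (intros [-> ->]; auto).
  assert (((i' = i + 1 /\ j' = j) \/ (i = i' + 1 /\ j' = j) \/ (i' = i /\ j' = j + 1) \/
           (i' = i /\ j = j' + 1) \/ (i' = i + 1 /\ j = j' + 1) \/ (i = i' + 1 /\ j' = j + 1))%nat)
    as [[-> ->]|[[-> ->]|[[-> ->]|[[-> ->]|[[-> ->]|[-> ->]]]]]] by lia.
  - common_corner (INR i + 1, INR j + 1).
  - common_corner (INR i' + 1, INR j + 1).
  - common_corner (INR i + 1, INR j + 1).
  - common_corner (INR i + 1, INR j' + 1).
  - common_corner (INR i + 1, INR j' + 1).
  - common_corner (INR i' + 1, INR j + 1).
Qed.

Lemma up_down_cells_edge_to_edge i j i' j' :
  cells_edge_to_edge (true, i, j) (false, i', j').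
Proof.
  disjoint_or_meet (true, i, j) (false, i', j').
  assert (i <= i' + 1)%nat by nat_ineq. assert (j <= j' + 1)%nat by nat_ineq.
  assert (i' + j' <= i + j)%nat by nat_ineq. assert (i + j <= i' + j' + 1 + 1)%nat by nat_ineq.
  assert (((i' = i /\ j' = j) \/ (i = i' + 1 /\ j' = j) \/ (i' = i /\ j = j' + 1) \/
           (i = i' + 1 /\ j = j' + 1) \/ (i' = i + 1 /\ j = j' + 1) \/
           (i = i' + 1 /\ j' = j + 1))%nat)
    as [[-> ->]|[[-> ->]|[[-> ->]|[[-> ->]|[[-> ->]|[-> ->]]]]]] by lia.
  - common_edge (INR i + 1, INR j) (INR i, INR j + 1) (fun X Y : R => INR i + 1 - X).
  - common_edge (INR i' + 1, INR j) (INR i' + 1, INR j + 1) (fun X Y : R => Y - INR j).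
  - common_edge (INR i, INR j' + 1) (INR i + 1, INR j' + 1) (fun X Y : R => X - INR i).
  - common_corner (INR i' + 1, INR j' + 1).
  - common_corner (INR i + 1, INR j' + 1).
  - common_corner (INR i' + 1, INR j + 1).
Qed.

Lemma distinct_cells_edge_to_edge (c1 c2 : cell) :
  c1 <> c2 -> cells_edge_to_edge c1 c2.
Proof.
  destruct c1 as [[[] i] j], c2 as [[[] i'] j']; intros Hne.
  - apply up_cells_edge_to_edge; congruence.
  - apply up_down_cells_edge_to_edge.
  - apply cells_edge_to_edge_sym, up_down_cells_edge_to_edge.
  - apply down_cells_edge_to_edge; congruence.
Qed.

Definition frame_img (O e1 e2 : pt) (P : R * R) : pt := frame_pt O e1 e2 (fst P) (snd P).

Definition cell_tri (O e1 e2 : pt) (c : cell) : pt * pt * pt :=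
  let '(P, Q, T) := cell_corners c in
  (frame_img O e1 e2 P, frame_img O e1 e2 Q, frame_img O e1 e2 T).

Lemma cell_tri_vertices O e1 e2 c :
  tri_vertices (cell_tri O e1 e2 c) = map (frame_img O e1 e2) (corner_list c).
Proof. destruct c as [[[] i] j]; reflexivity. Qed.

Lemma cell_tri_unit O e1 e2 c : equilateral_frame e1 e2 -> unit_triangle (cell_tri O e1 e2 c).
Proof.
  intros Hf; destruct c as [[[] i] j]; simpl; unfold frame_img; simpl;
    rewrite !frame_pt_dist by exact Hf; repeat split;
    match goal with |- sqrt ?e = 1 => replace e with 1 by ring; exact sqrt_1 end.
Qed.

Lemma cell_tri_region O e1 e2 c x :
  tri_region (cell_tri O e1 e2 c) x <-> exists X Y, x = frame_pt O e1 e2 X Y /\ in_cell c X Y.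
Proof.
  destruct c as [[[] i] j]; simpl; unfold frame_img; simpl; rewrite conv3E; split.
  - intros (u & v & w & ? & ? & ? & ? & ->); exists (INR i + v), (INR j + w); split; [|lra].
    replace u with (1 - v - w) by lra; apply pt_ext; unfold frame_pt; simpl; ring.
  - intros (X & Y & -> & ? & ? & ?).
    exists (1 - (X - INR i) - (Y - INR j)), (X - INR i), (Y - INR j).
    repeat split; try lra; apply pt_ext; unfold frame_pt; simpl; ring.
  - intros (u & v & w & ? & ? & ? & ? & ->); exists (INR i + 1 - v), (INR j + 1 - u); split; [|lra].
    replace w with (1 - v - u) by lra; apply pt_ext; unfold frame_pt; simpl; ring.
  - intros (X & Y & -> & ? & ? & ?).
    exists (INR j + 1 - Y), (INR i + 1 - X), (X + Y - INR i - INR j - 1).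
    repeat split; try lra; apply pt_ext; unfold frame_pt; simpl; ring.
Qed.

Lemma cell_tri_common O e1 e2 c1 c2 x : equilateral_frame e1 e2 ->
  (tri_region (cell_tri O e1 e2 c1) x /\ tri_region (cell_tri O e1 e2 c2) x) <->
  exists X Y, x = frame_pt O e1 e2 X Y /\ in_cell c1 X Y /\ in_cell c2 X Y.
Proof.
  intros Hf; rewrite !cell_tri_region; split.
  - intros [(X & Y & -> & H1) (X' & Y' & E & H2)].
    apply frame_pt_inj in E as [<- <-]; auto; exists X, Y; auto.
  - intros (X & Y & -> & H1 & H2); split; exists X, Y; auto.
Qed.

Lemma cell_tris_edge_to_edge O e1 e2 c1 c2 : equilateral_frame e1 e2 -> c1 <> c2 ->
  edge_to_edge (cell_tri O e1 e2 c1) (cell_tri O e1 e2 c2).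
Proof.
  intros Hf Hne; unfold edge_to_edge; rewrite !cell_tri_vertices.
  destruct (distinct_cells_edge_to_edge c1 c2 Hne)
    as [H|[(P & HP1 & HP2 & H)|(P & Q & HPQ & HP1 & HP2 & HQ1 & HQ2 & H)]].
  - left; intros x Hx; apply cell_tri_common in Hx as (X & Y & _ & H1 & H2); auto.
    apply (H X Y); auto.
  - right; left; exists (frame_img O e1 e2 P); do 2 (split; [apply in_map; auto|]).
    intros x; rewrite cell_tri_common by auto; split.
    + intros (X & Y & -> & HXY); apply H in HXY as [-> ->]; reflexivity.
    + intros ->; exists (fst P), (snd P); split; [reflexivity|apply H; auto].
  - right; right; exists (frame_img O e1 e2 P), (frame_img O e1 e2 Q); split.
    { intros E; apply frame_pt_inj in E as [E1 E2]; auto.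
      apply HPQ; destruct P, Q; simpl in *; congruence. }
    do 4 (split; [apply in_map; auto|]).
    intros x; rewrite cell_tri_common, conv2E by auto; split.
    + intros (X & Y & -> & HXY); apply H in HXY as (s & Hs & -> & ->).
      exists s; split; auto; apply pt_ext; unfold frame_img, frame_pt; simpl; ring.
    + intros (s & Hs & ->).
      exists ((1 - s) * fst P + s * fst Q), ((1 - s) * snd P + s * snd Q); split.
      * apply pt_ext; unfold frame_img, frame_pt; simpl; ring.
      * apply H; exists s; auto.
Qed.

Lemma nat_floor (n : nat) (r : R) :
  0 <= r <= INR n + 1 -> exists i, (i <= n)%nat /\ INR i <= r <= INR i + 1.
Proof.
  induction n as [|n IH]; intros Hr.
  - exists 0%nat; simpl in *; split; [lia|lra].
  - rewrite S_INR in Hr; destruct (Rle_lt_dec r (INR n + 1)) as [Hle|Hlt].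
    + destruct IH as (i & Hi & Hri); [lra|]; exists i; split; [lia|lra].
    + exists (S n); rewrite S_INR; split; [lia|lra].
Qed.

Lemma NoDup_list_prod {A B : Type} (l1 : list A) (l2 : list B) :
  NoDup l1 -> NoDup l2 -> NoDup (list_prod l1 l2).
Proof.
  induction l1 as [|a l1 IH]; intros H1 H2; simpl; [constructor|].
  inversion H1 as [|? ? Ha Hl1]; subst; apply NoDup_app.
  - apply Injective_map_NoDup; auto; intros x y E; injection E; auto.
  - apply IH; auto.
  - intros [a' b'] Hx Hy; apply in_map_iff in Hx as (y & E & _); injection E; intros; subst.
    apply in_prod_iff in Hy; tauto.
Qed.

Definition cell_fits (m : nat) (c : cell) : bool :=
  let '(b, i, j) := c in if b then (i + j <? m)%nat else (i + j + 1 <? m)%nat.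

(* The cells tiling the frame trapezoid 0 <= X, 0 <= Y <= k, X + Y <= m. *)
Definition trapezoid_cells (m k : nat) : list cell :=
  filter (cell_fits m) (list_prod (list_prod [true; false] (seq 0 m)) (seq 0 k)).

Lemma in_trapezoid_cells m k b i j :
  In (b, i, j) (trapezoid_cells m k) <->
  (j < k)%nat /\ (if b then i + j < m else i + j + 1 < m)%nat.
Proof.
  unfold trapezoid_cells; rewrite filter_In, !in_prod_iff, !in_seq; simpl.
  destruct b; rewrite Nat.ltb_lt; split; intros; intuition lia.
Qed.

Lemma NoDup_trapezoid_cells m k : NoDup (trapezoid_cells m k).
Proof.
  apply NoDup_filter, NoDup_list_prod; [apply NoDup_list_prod|]; try apply seq_NoDup.
  repeat constructor; simpl; intuition discriminate.
Qed.

Lemma trapezoid_cells_cover O e1 e2 (m k : nat) x : (1 <= k <= m)%nat ->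
  (exists X Y, x = frame_pt O e1 e2 X Y /\
     0 <= X /\ 0 <= Y <= INR k /\ X + Y <= INR m) <->
  (exists c, In c (trapezoid_cells m k) /\ tri_region (cell_tri O e1 e2 c) x).
Proof.
  intros Hkm; split.
  - intros (X & Y & -> & HX & HY & HXY).
    destruct (nat_floor (k - 1) Y) as (j & Hj & HYj).
    { rewrite minus_INR, INR_1 by lia; lra. }
    destruct (nat_floor (m - j - 1) X) as (i & Hi & HXi).
    { rewrite !minus_INR, INR_1 by lia; lra. }
    assert (Hjm : (j + 1 <= m)%nat) by lia.
    apply le_INR in Hjm; rewrite plus_INR, INR_1 in Hjm.
    destruct (Rle_lt_dec (X + Y) (INR i + INR j + 1)) as [Hup|Hdown].
    + exists (true, i, j); rewrite in_trapezoid_cells, cell_tri_region; split; [lia|].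
      exists X, Y; simpl; split; auto; lra.
    + exists (false, i, j); rewrite in_trapezoid_cells, cell_tri_region; split.
      * split; [lia|]; apply INR_lt; rewrite !plus_INR, INR_1; lra.
      * exists X, Y; simpl; split; auto; lra.
  - intros ([[b i] j] & Hc & Hx).
    apply in_trapezoid_cells in Hc as [Hj Hij].
    apply cell_tri_region in Hx as (X & Y & -> & HXY); exists X, Y; split; auto.
    assert (Hjk : (j + 1 <= k)%nat) by lia.
    assert (Hijm : (i + j + (if b then 1 else 1 + 1) <= m)%nat) by (destruct b; lia).
    apply le_INR in Hjk, Hijm; pose proof (pos_INR i); pose proof (pos_INR j).
    destruct b; simpl in HXY; rewrite !plus_INR, INR_1 in *; lra.
Qed.

Lemma lattice_trapezoid_polyiamond O e1 e2 (m k : nat) P0 P1 P2 P3 :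
  equilateral_frame e1 e2 -> (1 <= k <= m)%nat ->
  P0 = frame_pt O e1 e2 0 0 -> P1 = frame_pt O e1 e2 (INR m) 0 ->
  P2 = frame_pt O e1 e2 (INR m - INR k) (INR k) -> P3 = frame_pt O e1 e2 0 (INR k) ->
  convex_polyiamond (conv [P0; P1; P2; P3]).
Proof.
  intros Hf Hkm -> -> -> ->; split; [apply conv_convex|].
  assert (Hk : 0 < INR k) by (apply lt_0_INR; lia).
  assert (Hm : INR k <= INR m) by (apply le_INR; lia).
  exists (map (cell_tri O e1 e2) (trapezoid_cells m k)); split; [|split].
  - intros T HT; apply in_map_iff in HT as (c & <- & _); apply cell_tri_unit; auto.
  - intros p q d Hpq Hp Hq; rewrite length_map in Hp, Hq.
    set (c0 := (true, 0%nat, 0%nat) : cell).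
    rewrite !(nth_indep _ d (cell_tri O e1 e2 c0)) by (rewrite length_map; auto).
    rewrite !map_nth; apply cell_tris_edge_to_edge; auto; intros E.
    apply Hpq, (proj1 (NoDup_nth _ c0) (NoDup_trapezoid_cells m k)); auto.
  - intros x; rewrite conv_frame_quad by lra.
    transitivity (exists c, In c (trapezoid_cells m k) /\ tri_region (cell_tri O e1 e2 c) x).
    + rewrite <- trapezoid_cells_cover by auto; split;
        intros (X & Y & -> & ? & ? & ?); exists X, Y; repeat split; auto; nra.
    + split.
      * intros (c & Hc & Hx); exists (cell_tri O e1 e2 c); split; auto; apply in_map; auto.
      * intros (T & HT & Hx); apply in_map_iff in HT as (c & <- & Hc); eauto.
Qed.

(** * Faces *)

Lemma face_conv_vertices V Z n c (F : pset) :
  (forall x, F x <-> conv V x /\ dot n x = c) ->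
  (forall v, In v V -> dot n v <= c) ->
  (forall v, In v V -> dot n v < c \/ In v Z) ->
  (forall v, In v Z -> dot n v = c) -> incl Z V ->
  forall x, F x <-> conv Z x.
Proof.
  intros HF Hle HZ Hon Hincl x; rewrite HF; split.
  - intros [Hx Hxc]; apply (conv_supported V Z n c); auto.
  - intros Hx; split; [apply (conv_incl Z); auto|apply (conv_eq Z); auto].
Qed.

Lemma face_in_segment_collinear V n c (F : pset) X Y p q r :
  (forall x, F x <-> conv V x /\ dot n x = c) ->
  (forall v, In v V -> dot n v <= c) ->
  (forall v, In v V -> dot n v < c \/ In v [X; Y]) ->
  F p -> F q -> F r -> cross (vsub q p) (vsub r p) = vzero.
Proof.
  intros HF Hle HXY Hp Hq Hr.
  assert (Hseg : forall z, F z -> conv [X; Y] z)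
    by (intros z Hz; apply HF in Hz as [? ?]; apply (conv_supported V _ n c); auto).
  apply (conv2_collinear X Y); auto.
Qed.

Lemma convex_polyiamond_ext (F F' : pset) :
  (forall x, F x <-> F' x) -> convex_polyiamond F' -> convex_polyiamond F.
Proof.
  intros H [Hc (Ts & HT & He & HF)]; split.
  - intros x y t Hx Hy Ht; apply H; apply H in Hx, Hy; apply Hc; auto.
  - exists Ts; split; [auto|split; [auto|]]; intros x; rewrite H; apply HF.
Qed.

Lemma domed_by_ext V (P P' : pset) :
  (forall x, P x <-> P' x) -> domed_by V P -> domed_by V P'.
Proof.
  intros E (Hpoly & (n & c & Hn & Hsup & HP & (p & q & r & Hp & Hq & Hr & Hpqr)) & Hfaces).
  split; [auto|split].
  - exists n, c; split; [auto|split; [auto|split]].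
    + intros x; rewrite <- E; apply HP.
    + exists p, q, r; rewrite <- !E; auto.
  - intros F HFace; destruct (Hfaces F HFace) as [H|H]; [left|right; auto].
    intros x; rewrite H; auto.
Qed.

Lemma rectangle_swap o u v a b x : rectangle o u v a b x <-> rectangle o v u b a x.
Proof.
  split; intros (s & t & Hs & Ht & ->); exists t, s; repeat split; auto; try lra.
  all: apply pt_ext; simpl; ring.
Qed.

(** * The roof *)

Definition inv_sqrt2 : R := sqrt 2 / 2.

Lemma inv_sqrt2_sq : inv_sqrt2 * inv_sqrt2 = 1 / 2.
Proof.
  unfold inv_sqrt2; replace (sqrt 2 / 2 * (sqrt 2 / 2)) with (sqrt 2 * sqrt 2 / 4) by field.
  rewrite sqrt_sqrt; lra.
Qed.

Lemma inv_sqrt2_pos : 0 < inv_sqrt2.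
Proof. unfold inv_sqrt2; pose proof (sqrt_lt_R0 2); lra. Qed.

Section Roof.

Variables a b : nat.
Hypothesis b_pos : (1 <= b)%nat.
Hypothesis b_le_a : (b <= a)%nat.

(* E - A = b (1/2, 1/2, 1/sqrt 2) is b times a unit vector at 60 degrees to
   both base axes: this height of the ridge puts the slanted faces in
   triangular lattices of unit side. *)
Let A := Pt 0 0 0.
Let B := Pt (INR a) 0 0.
Let C := Pt (INR a) (INR b) 0.
Let D := Pt 0 (INR b) 0.
Let E := Pt (INR b / 2) (INR b / 2) (INR b * inv_sqrt2).
Let G := Pt (INR a - INR b / 2) (INR b / 2) (INR b * inv_sqrt2).
Let roof := [A; B; C; D; E; G].

Lemma INR_b_ge_1 : 1 <= INR b.
Proof. apply (le_INR 1); exact b_pos. Qed.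

Lemma INR_b_le_a : INR b <= INR a.
Proof. apply le_INR; exact b_le_a. Qed.

(* [congruence] covers the square case a = b, where G = E. *)
Ltac in_list := simpl; solve [repeat (first [left; solve [reflexivity | congruence] | right])].
Ltac each_vertex := let v := fresh "v" in let Hv := fresh "Hv" in
  intros v Hv; simpl in Hv; repeat destruct Hv as [<-|Hv]; try contradiction.
Ltac strict_or_in := each_vertex; first [left; lra | right; in_list].
Ltac face_obligations := split; [in_list|split; [strict_or_in|each_vertex; lra]].
Ltac prove_frame :=
  unfold equilateral_frame, dot; simpl; pose proof inv_sqrt2_sq; repeat split; lra.
Ltac prove_corner := apply pt_ext; unfold frame_pt; simpl; field.

Lemma roof_front_polyiamond : convex_polyiamond (conv [A; B; G; E]).
Proof.
  apply (lattice_trapezoid_polyiamond A (Pt 1 0 0) (Pt (1/2) (1/2) inv_sqrt2) a b);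
    auto; [prove_frame|prove_corner..].
Qed.

Lemma roof_back_polyiamond : convex_polyiamond (conv [D; C; G; E]).
Proof.
  apply (lattice_trapezoid_polyiamond D (Pt 1 0 0) (Pt (1/2) (-1/2) inv_sqrt2) a b);
    auto; [prove_frame|prove_corner..].
Qed.

Lemma roof_left_polyiamond : convex_polyiamond (conv [A; D; E; E]).
Proof.
  apply (lattice_trapezoid_polyiamond A (Pt 0 1 0) (Pt (1/2) (1/2) inv_sqrt2) b b);
    auto; [prove_frame|prove_corner..].
Qed.

Lemma roof_right_polyiamond : convex_polyiamond (conv [B; C; G; G]).
Proof.
  apply (lattice_trapezoid_polyiamond B (Pt 0 1 0) (Pt (-1/2) (1/2) inv_sqrt2) b b);
    auto; [prove_frame|prove_corner..].
Qed.

Lemma roof_base_rectangle x :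
  rectangle A (Pt 1 0 0) (Pt 0 1 0) (INR a) (INR b) x <-> conv [A; B; C; D] x.
Proof.
  pose proof INR_b_ge_1; pose proof INR_b_le_a.
  replace [A; B; C; D] with
    [frame_pt A (Pt 1 0 0) (Pt 0 1 0) 0 0; frame_pt A (Pt 1 0 0) (Pt 0 1 0) (INR a) 0;
     frame_pt A (Pt 1 0 0) (Pt 0 1 0) (INR a) (INR b); frame_pt A (Pt 1 0 0) (Pt 0 1 0) 0 (INR b)]
    by (repeat (f_equal; try prove_corner)).
  rewrite conv_frame_quad by lra; split.
  - intros (X & Y & HX & HY & ->); exists X, Y; repeat split; auto; nra.
  - intros (X & Y & -> & HX & HY & HXY); exists X, Y.
    split; [split; [lra|apply Rmult_le_reg_l with (INR b); nra]|split; [lra|reflexivity]].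
Qed.

Lemma roof_polyhedron : convex_polyhedron roof.
Proof.
  pose proof INR_b_ge_1; pose proof INR_b_le_a; pose proof inv_sqrt2_pos.
  exists A, B, D, E; repeat split; [in_list..|].
  unfold dot, cross, vsub; simpl.
  match goal with |- ?e <> 0 => replace e with (INR a * (INR b * (INR b * inv_sqrt2))) by ring end.
  apply Rgt_not_eq, Rlt_gt; repeat (apply Rmult_lt_0_compat; [lra|]); lra.
Qed.

Lemma ridge_height_pos : 0 < INR b * inv_sqrt2.
Proof. pose proof INR_b_ge_1; pose proof inv_sqrt2_pos; apply Rmult_lt_0_compat; lra. Qed.

Lemma roof_base_face x :
  (conv roof x /\ dot (Pt 0 0 (-1)) x = 0) <-> conv [A; B; C; D] x.
Proof.
  pose proof ridge_height_pos.
  apply (face_conv_vertices roof [A; B; C; D] (Pt 0 0 (-1)) 0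
           (fun y => conv roof y /\ dot (Pt 0 0 (-1)) y = 0)); [intros; tauto|..].
  - each_vertex; unfold dot; simpl; lra.
  - each_vertex; first [left; unfold dot; simpl; lra|right; in_list].
  - each_vertex; unfold dot; simpl; lra.
  - intros v Hv; simpl in *; tauto.
Qed.

Lemma roof_normal_zero n :
  dot n A = dot n B -> dot n A = dot n D -> dot n A = dot n E -> n = vzero.
Proof.
  pose proof INR_b_ge_1; pose proof INR_b_le_a; pose proof ridge_height_pos.
  destruct n as [n1 n2 n3]; unfold dot; simpl; intros HB HD HE.
  assert (n1 = 0) as -> by (apply (Rmult_eq_reg_r (INR a)); lra).
  assert (n2 = 0) as -> by (apply (Rmult_eq_reg_r (INR b)); lra).
  assert (n3 = 0) as -> by (apply (Rmult_eq_reg_r (INR b * inv_sqrt2)); lra).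
  reflexivity.
Qed.

Lemma roof_dot_C n : dot n C = dot n B + dot n D - dot n A.
Proof. unfold dot; simpl; ring. Qed.

Lemma roof_dot_ridge n :
  dot n G - dot n E = (1 - INR b / INR a) * (dot n B - dot n A).
Proof. pose proof INR_b_ge_1; pose proof INR_b_le_a; unfold dot; simpl; field; lra. Qed.

Lemma roof_square_ridge : a = b -> G = E.
Proof. intros ->; apply pt_ext; simpl; field. Qed.

Lemma roof_ridge_cases n :
  (G = E /\ dot n G = dot n E) \/
  (dot n B < dot n A /\ dot n G < dot n E) \/
  (dot n B = dot n A /\ dot n G = dot n E) \/
  (dot n A < dot n B /\ dot n E < dot n G).
Proof.
  destruct (Nat.eq_dec a b) as [Hab|Hab].
  - left; rewrite (roof_square_ridge Hab); auto.
  - right; pose proof (roof_dot_ridge n) as Hr.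
    assert (Hpos : 0 < 1 - INR b / INR a).
    { assert (INR b < INR a) by (apply lt_INR; lia); pose proof INR_b_ge_1.
      replace (1 - INR b / INR a) with ((INR a - INR b) / INR a) by (field; lra).
      apply Rdiv_lt_0_compat; lra. }
    destruct (Rtotal_order (dot n B) (dot n A)) as [Hlt|[Heq|Hgt]]; [left|right; left|right; right];
      split; auto; nra.
Qed.

Lemma roof_facet_vertices n c :
  n <> vzero ->
  (forall v, In v roof -> dot n v <= c) ->
  (forall X Y, ~ (forall v, In v roof -> dot n v < c \/ In v [X; Y])) ->
  exists Z, In Z [[A; B; C; D]; [A; B; G; E]; [D; C; G; E]; [A; D; E; E]; [B; C; G; G]] /\
    (forall v, In v roof -> dot n v < c \/ In v Z) /\ (forall v, In v Z -> dot n v = c).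
Proof.
  intros Hn Hle Hseg.
  assert (Hnd : ~ (dot n A = c /\ dot n B = c /\ dot n D = c /\ dot n E = c))
    by (intros (? & ? & ? & ?); apply Hn, roof_normal_zero; congruence).
  pose proof (roof_dot_C n).
  pose proof (Hle A ltac:(in_list)); pose proof (Hle B ltac:(in_list)).
  pose proof (Hle C ltac:(in_list)); pose proof (Hle D ltac:(in_list)).
  pose proof (Hle E ltac:(in_list)); pose proof (Hle G ltac:(in_list)).
  destruct (roof_ridge_cases n) as [[? ?]|[[? ?]|[[? ?]|[? ?]]]];
  repeat match goal with H : dot n _ <= c |- _ => apply Rle_lt_or_eq in H as [?|?] end;
  first
  [ exfalso; lra
  | exfalso; apply Hnd; repeat split; assumption
  | exists [A; B; C; D]; face_obligations
  | exists [A; B; G; E]; face_obligations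
  | exists [D; C; G; E]; face_obligations
  | exists [A; D; E; E]; face_obligations
  | exists [B; C; G; G]; face_obligations
  | exfalso; match goal with
    | H1 : dot n ?X = c, H2 : dot n ?Y = c |- _ => apply (Hseg X Y); strict_or_in
    | H1 : dot n ?X = c |- _ => apply (Hseg X X); strict_or_in
    | _ => apply (Hseg A A); strict_or_in
    end ].
Qed.

Lemma roof_domes_rectangle :
  domed_by roof (rectangle A (Pt 1 0 0) (Pt 0 1 0) (INR a) (INR b)).
Proof.
  split; [exact roof_polyhedron|split].
  - exists (Pt 0 0 (-1)), 0; split; [intros E0; injection E0; lra|split; [|split]].
    + pose proof ridge_height_pos.
      intros x; apply (conv_le roof); each_vertex; unfold dot; simpl; lra.
    + intros x; rewrite roof_base_rectangle, roof_base_face; reflexivity.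
    + exists A, B, D; rewrite !roof_base_rectangle; repeat split; try (apply conv_in; in_list).
      pose proof INR_b_ge_1; pose proof INR_b_le_a.
      unfold cross, vsub; simpl; intros E0; injection E0; intros; nra.
  - intros F (n & c & Hn & Hsup & HF & p & q & r & Hp & Hq & Hr & Hpqr).
    assert (Hle : forall v, In v roof -> dot n v <= c) by (intros; apply Hsup, conv_in; auto).
    destruct (roof_facet_vertices n c Hn Hle) as (Z & HZ & Hstrict & Hon).
    { intros X Y HXY; apply Hpqr, (face_in_segment_collinear roof n c F X Y); auto. }
    assert (HFZ : forall x, F x <-> conv Z x).
    { apply (face_conv_vertices roof Z n c); auto.
      intros v Hv; simpl in HZ; repeat destruct HZ as [<-|HZ]; try contradiction;
        simpl in Hv |- *; tauto. }
    simpl in HZ; repeat destruct HZ as [<-|HZ]; try contradiction.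
    + left; intros x; rewrite HFZ, roof_base_rectangle; reflexivity.
    + right; apply (convex_polyiamond_ext _ _ HFZ), roof_front_polyiamond.
    + right; apply (convex_polyiamond_ext _ _ HFZ), roof_back_polyiamond.
    + right; apply (convex_polyiamond_ext _ _ HFZ), roof_left_polyiamond.
    + right; apply (convex_polyiamond_ext _ _ HFZ), roof_right_polyiamond.
Qed.

End Roof.

Theorem lemma1 (a b : nat) (ha : (0 < a)%nat) (hb : (0 < b)%nat) :
  exists (V : list pt) (o u v : pt),
    orthonormal u v /\ domed_by V (rectangle o u v (INR a) (INR b)).
Proof.
  assert (Hx : orthonormal (Pt 1 0 0) (Pt 0 1 0)) by (unfold orthonormal, dot; simpl; lra).
  assert (Hy : orthonormal (Pt 0 1 0) (Pt 1 0 0)) by (unfold orthonormal, dot; simpl; lra).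
  destruct (Nat.le_gt_cases b a) as [Hba|Hab].
  - eexists; exists (Pt 0 0 0), (Pt 1 0 0), (Pt 0 1 0); split; [exact Hx|].
    apply roof_domes_rectangle; lia.
  - eexists; exists (Pt 0 0 0), (Pt 0 1 0), (Pt 1 0 0); split; [exact Hy|].
    apply (domed_by_ext _ (rectangle (Pt 0 0 0) (Pt 1 0 0) (Pt 0 1 0) (INR b) (INR a))).
    + intros x; apply rectangle_swap.
    + apply roof_domes_rectangle; lia.
Qed.
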